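(* Let $G=(V,E)$ be an undirected graph without isolated vertices, let $v\in V$, and let $G_v$ be the subgraph of $G$ induced by the set of neighbors of $v$ (not including $v$). Then $\nu_v$ equals the fractional clique number of $G_v$ (equivalently, the fractional chromatic number of $G_v$).
   Context: Vertex Cover set system of $G$: agents are the vertices, feasible sets are the vertex covers of $G$. For a cost vector $c$ and $y(X)=\sum_{u\in X}y_u$: let $S$ be a vertex cover minimizing $c(S)$ (ties broken lexicographically); $\nu(c)$ is the maximum of $x(S)$ over $x\in\mathbb R^V$ subject to $x_u\ge c_u$ for all $u$, $x_u=c_u$ for $u\notin S$, and $x(S)\le x(T)$ for every vertex cover $T$. $\nu_v=\nu(\mathbf 1_v)$, where $\mathbf 1_v$ has $1$ at $v$ and $0$ elsewhere. The fractional clique number of a graph $H$ is the maximum of $\sum_u x_u$ subject to $x_u\ge 0$ and $\sum_{u\in I}x_u\le1$ for every independent set $I$ of $H$. *)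

From HB Require Import structures.
From mathcomp Require Import all_boot all_order all_algebra.
Set Implicit Arguments. Unset Strict Implicit. Unset Printing Implicit Defensive.
Import Order.TTheory GRing.Theory Num.Theory.
Local Open Scope ring_scope.

Definition simple_graph (V : finType) (e : rel V) : Prop :=
  symmetric e /\ irreflexive e.

Definition no_isolated (V : finType) (e : rel V) : Prop :=
  forall u : V, exists w : V, e u w.

Definition vertex_cover (V : finType) (e : rel V) (S : {set V}) : bool :=
  [forall u, forall w, e u w ==> (u \in S) || (w \in S)].

Definition independent (V : finType) (e : rel V) (I : {set V}) : bool :=
  [forall u in I, forall w in I, ~~ e u w].

Definition wt (R : realFieldType) (V : finType) (y : V -> R) (X : {set V}) : R :=
  \sum_(u in X) y u.

Fixpoint lexle (s t : seq bool) : bool :=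
  match s, t with
  | [::], _ => true
  | _ :: _, [::] => false
  | a :: s', b :: t' => (~~ a && b) || ((a == b) && lexle s' t')
  end.

Definition charvec (V : finType) (S : {set V}) : seq bool :=
  [seq u \in S | u <- enum V].

Definition min_cost_cover (R : realFieldType) (V : finType) (e : rel V)
    (c : V -> R) (S : {set V}) : bool :=
  vertex_cover e S && [forall T : {set V}, vertex_cover e T ==> (wt c S <= wt c T)].

Definition chosen_cover (R : realFieldType) (V : finType) (e : rel V)
    (c : V -> R) : {set V} :=
  extremum lexle setT (fun S => min_cost_cover e c S) (fun S => charvec S).

Definition nu_feasible (R : realFieldType) (V : finType) (e : rel V)
    (c : V -> R) (x : V -> R) : Prop :=
  let S := chosen_cover e c in
  (forall u, c u <= x u) /\
  (forall u, u \notin S -> x u = c u) /\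
  (forall T : {set V}, vertex_cover e T -> wt x S <= wt x T).

Definition is_nu (R : realFieldType) (V : finType) (e : rel V)
    (c : V -> R) (r : R) : Prop :=
  (exists x, nu_feasible e c x /\ wt x (chosen_cover e c) = r) /\
  (forall x, nu_feasible e c x -> wt x (chosen_cover e c) <= r).

Definition unit_cost (R : realFieldType) (V : finType) (v : V) : V -> R :=
  fun u => if u == v then 1 else 0.

Definition fclique_feasible (R : realFieldType) (T : finType) (h : rel T)
    (x : T -> R) : Prop :=
  (forall u, 0 <= x u) /\
  (forall I : {set T}, independent h I -> wt x I <= 1).

Definition is_fclique_number (R : realFieldType) (T : finType) (h : rel T)
    (r : R) : Prop :=
  (exists x, fclique_feasible h x /\ \sum_u x u = r) /\
  (forall x, fclique_feasible h x -> \sum_u x u <= r).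

(* G_v: subgraph induced by the neighbours of v (v excluded, by irreflexivity) *)
Definition nbhd_type (V : finType) (e : rel V) (v : V) : finType :=
  {u : V | e v u}.

Definition nbhd_rel (V : finType) (e : rel V) (v : V) : rel (nbhd_type e v) :=
  fun a b => e (val a) (val b).
Arguments nbhd_rel {V} e v.
Arguments nbhd_type {V} e v.

(* The minimum cover S chosen for the cost 1_v avoids v, hence contains every
   neighbour of v.  For a feasible x of the LP defining nu_v, a vertex u of S
   outside N(v) can be exchanged for its neighbours outside S, which cost 0, so
   x u = 0 and x(S) = x(N(v)).  For an independent set J of G_v, V \ J is a
   cover, so x(S) <= x(V) - x(J) = x(S) + 1 - x(J): the restriction of x to
   N(v) is a fractional clique of G_v.  Conversely, 1_v plus a fractional
   clique of G_v extended by zero is feasible with value its total weight.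
   The two maxima therefore agree once the fractional clique LP is known to
   attain its maximum, which Fourier-Motzkin elimination gives over any real
   field. *)

From HB Require Import structures.
From mathcomp Require Import all_boot all_order all_algebra.
From mathcomp Require Import ring.
Set Implicit Arguments. Unset Strict Implicit. Unset Printing Implicit Defensive.
Import Order.TTheory GRing.Theory Num.Theory.
Local Open Scope ring_scope.

Section FourierMotzkin.
Variable R : realFieldType.

(* [a] encodes [\sum_(i < n) a.1`_i * x i <= a.2] for systems in the variables
   [x 0, ..., x n.-1]. *)
Definition ineq := (seq R * R)%type.

Implicit Types (x y : nat -> R) (a p q : ineq) (s : seq ineq) (t : R).

Definition lhs n x a : R := \sum_(i < n) a.1`_i * x i.
Definition holds n x a : bool := lhs n x a <= a.2.
Definition solves n x s : bool := all (holds n x) s.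

Definition set_var n x t : nat -> R := fun i => if i == n then t else x i.

Definition bound n x a : R := (a.2 - lhs n x a) / a.1`_n.

Definition pos_part n s := [seq a <- s | 0 < a.1`_n].
Definition neg_part n s := [seq a <- s | a.1`_n < 0].
Definition zero_part n s := [seq a <- s | a.1`_n == 0].

Lemma solves_eq n x y s : (forall i, (i < n)%N -> x i = y i) -> solves n x s = solves n y s.
Proof.
move=> xy; apply: eq_all => a; rewrite /holds /lhs.
by under eq_bigr => i _ do rewrite xy //.
Qed.

Lemma lhsS n x a : lhs n.+1 x a = lhs n x a + a.1`_n * x n.
Proof. by rewrite /lhs big_ord_recr. Qed.

Lemma lhs_set_var n x t a : lhs n (set_var n x t) a = lhs n x a.
Proof. by apply: eq_bigr => i _; rewrite /set_var ltn_eqF. Qed.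

Lemma holds_set_var n x t a : holds n.+1 (set_var n x t) a =
  if 0 < a.1`_n then t <= bound n x a
  else if a.1`_n < 0 then bound n x a <= t else holds n x a.
Proof.
rewrite /holds lhsS lhs_set_var /set_var eqxx /bound.
case: ltrgtP => [an|an|<-]; last by rewrite mul0r addr0.
- by rewrite ler_pdivlMr // lerBrDl (mulrC t).
- by rewrite ler_ndivrMr // lerBrDl (mulrC t).
Qed.

Lemma solves_set_var n x t s : solves n.+1 (set_var n x t) s =
  [&& solves n x (zero_part n s), all (fun a => t <= bound n x a) (pos_part n s)
    & all (fun a => bound n x a <= t) (neg_part n s)].
Proof.
rewrite /solves !all_filter -!all_predI; apply: eq_all => a /=.
by rewrite holds_set_var; case: ltrgtP; rewrite /= ?andbT.
Qed.

Definition fm_comb n p q : ineq :=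
  (mkseq (fun i => - q.1`_n * p.1`_i + p.1`_n * q.1`_i) n, - q.1`_n * p.2 + p.1`_n * q.2).

Definition fm_elim n s : seq ineq :=
  zero_part n s ++ [seq fm_comb n p q | p <- pos_part n s, q <- neg_part n s].

Lemma lhs_fm_comb n x p q :
  lhs n x (fm_comb n p q) = - q.1`_n * lhs n x p + p.1`_n * lhs n x q.
Proof.
rewrite /lhs !mulr_sumr -big_split /=; apply: eq_bigr => i _.
by rewrite nth_mkseq // mulrDl !mulrA.
Qed.

Lemma holds_fm_comb n x p q : 0 < p.1`_n -> q.1`_n < 0 ->
  holds n x (fm_comb n p q) = (bound n x q <= bound n x p).
Proof.
move=> pn qn; rewrite /holds lhs_fm_comb /bound.
rewrite ler_pdivlMr // mulrAC ler_ndivrMr //.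
by rewrite /= -subr_ge0 -[X in _ = X]subr_ge0; congr (_ <= _); ring.
Qed.

Lemma solves_fm_elim n x s : solves n.+1 x s -> solves n x (fm_elim n s).
Proof.
rewrite (@solves_eq _ _ (set_var n x (x n))); last first.
  by move=> i _; rewrite /set_var; case: eqP => // ->.
rewrite solves_set_var => /and3P[zs /allP ps /allP ns].
rewrite /solves all_cat; apply/andP; split=> //; apply/all_allpairsP => p q pP qN.
move: (pP) (qN); rewrite !mem_filter => /andP[pn _] /andP[qn _].
by rewrite holds_fm_comb // (le_trans (ns q qN)) ?ps.
Qed.

Lemma fm_elim_lift n x s : solves n x (fm_elim n s) -> exists t, solves n.+1 (set_var n x t) s.
Proof.
rewrite {1}/solves all_cat => /andP[zs /all_allpairsP combs].
(* Take the least upper bound, capped below by the largest lower bound: the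
   combined inequalities say that every lower bound is below every upper one. *)
pose lo := \big[Num.max/0]_(q <- neg_part n s) bound n x q.
exists (\big[Num.min/lo]_(p <- pos_part n s) bound n x p).
rewrite solves_set_var; apply/and3P; split=> //; apply/allP => a aS.
  exact: ge_bigmin_seq.
rewrite big_seq; apply: le_bigmin => [|p pP]; first exact: le_bigmax_seq.
move: (pP) (aS); rewrite !mem_filter => /andP[pn _] /andP[an _].
by rewrite -holds_fm_comb //; apply: combs.
Qed.

Lemma lp_max_base s x0 M : solves 1 x0 s -> (forall x, solves 1 x s -> x 0%N <= M) ->
  exists2 x, solves 1 x s & forall y, solves 1 y s -> y 0%N <= x 0%N.
Proof.
have sol1 y : solves 1 y s = solves 1 (set_var 0 x0 (y 0%N)) s.
  by apply: solves_eq => -[].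
move=> feas0 hM; move: (feas0); rewrite sol1 solves_set_var => /and3P[zs _ /allP lo].
have feas t : all (fun a => t <= bound 0 x0 a) (pos_part 0 s) -> x0 0%N <= t ->
    solves 1 (set_var 0 x0 t) s.
  move=> up ht; rewrite solves_set_var zs up; apply/allP => a aN.
  exact: le_trans (lo a aN) ht.
have ub y : solves 1 y s -> all (fun a => y 0%N <= bound 0 x0 a) (pos_part 0 s).
  by rewrite sol1 solves_set_var => /and3P[].
case E: (pos_part 0 s) => [|p0 ps].
  have : M + 1 <= M.
    apply: (hM (set_var 0 x0 (M + 1))); apply: feas; first by rewrite E.
    by rewrite (le_trans (hM _ feas0)) // lerDl ler01.
  by rewrite gerDl ler10.
have ub0 y : solves 1 y s -> y 0%N <= bound 0 x0 p0.
  by move/ub; rewrite E => /andP[].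
exists (set_var 0 x0 (\big[Num.min/bound 0 x0 p0]_(p <- pos_part 0 s) bound 0 x0 p)).
  apply: feas; first by apply/allP => a aP; exact: ge_bigmin_seq.
  by rewrite big_seq; apply: le_bigmin => [|a]; [exact: ub0 | apply: allP (ub _ feas0) a].
move=> y feas_y; rewrite /set_var eqxx big_seq.
by apply: le_bigmin => [|a]; [exact: ub0 | apply: allP (ub _ feas_y) a].
Qed.

Lemma lp_max n s : (exists x, solves n.+1 x s) ->
    (exists M, forall x, solves n.+1 x s -> x 0%N <= M) ->
  exists2 x, solves n.+1 x s & forall y, solves n.+1 y s -> y 0%N <= x 0%N.
Proof.
elim: n s => [|n IH] s [x0 feas0] [M hM]; first exact: lp_max_base feas0 hM.
have [||x feas max_x] := IH (fm_elim n.+1 s).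
- by exists x0; apply: solves_fm_elim.
- by exists M => x /fm_elim_lift[t /hM].
have [t ht] := fm_elim_lift feas.
by exists (set_var n.+1 x t) => // y /solves_fm_elim /max_x.
Qed.

End FourierMotzkin.

Section Independence.
Variables (V : finType) (e : rel V).

Lemma vertex_coverP (S : {set V}) :
  reflect (forall u w, e u w -> (u \in S) || (w \in S)) (vertex_cover e S).
Proof.
apply: (iffP forallP) => [cov u w | cov u]; first exact: implyP (forallP (cov u) w).
by apply/forallP => w; apply/implyP; apply: cov.
Qed.

Lemma vertex_coverC (I : {set V}) : vertex_cover e (~: I) = independent e I.
Proof.
apply/vertex_coverP/forall_inP => [cov u uI | indep u w euw].
  by apply/forall_inP => w wI; apply/negP => /cov; rewrite !inE uI wI.
rewrite !inE -negb_and; apply/negP => /andP[uI wI].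
by have /forall_inP/(_ w wI) := indep u uI; rewrite euw.
Qed.

Lemma independent_set1 u : irreflexive e -> independent e [set u].
Proof.
by move=> e_irr; apply/forall_inP => a /set1P->; apply/forall_inP => b /set1P->; rewrite e_irr.
Qed.

End Independence.

Lemma wt_setC (R : realFieldType) (V : finType) (y : V -> R) (X : {set V}) :
  wt y X + wt y (~: X) = \sum_u y u.
Proof.
rewrite /wt [RHS](bigID (mem X)) /=; congr (_ + _).
by apply: eq_bigl => u; rewrite inE.
Qed.

Lemma lexle_refl : reflexive lexle.
Proof. by elim=> //= a s ->; rewrite eqxx orbT. Qed.

Lemma lexle_trans : transitive lexle.
Proof.
move=> t s u; elim: s t u => [|a s IH] [|b t] [|c u] //=.
by case: a; case: b; case: c => //=; exact: IH.
Qed.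

Lemma lexle_total : total lexle.
Proof. by elim=> [|a s IH] [|b t] //=; case: a; case: b => //=; exact: IH. Qed.

Section MinCostCover.
Variables (V : finType) (e : rel V).

Lemma min_cost_cover_exists (R : realFieldType) (c : V -> R) :
  exists S, min_cost_cover e c S.
Proof.
have covT : vertex_cover e setT by apply/vertex_coverP => u w _; rewrite inE.
case: (arg_minP (wt c) covT) => S covS minS; exists S.
by rewrite /min_cost_cover covS; apply/forall_inP.
Qed.

Lemma chosen_cover_min (R : realFieldType) (c : V -> R) :
  min_cost_cover e c (chosen_cover e c).
Proof.
(* The default [setT] of [extremum] is never returned: a minimum-cost cover
   [S0] exists, so the lexicographic minimum among them is picked. *)
have [S0 minS0] := min_cost_cover_exists c.
have := extremum_inP (fun S _ => lexle_refl (charvec S))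
  (fun _ _ _ _ _ _ => @lexle_trans _ _ _)
  (fun S T _ _ => lexle_total (charvec S) (charvec T)) minS0.
rewrite /chosen_cover /extremum; case: pickP => [S /andP[minS _] _ // | none [S minS ?]].
by have /negP[] := none S; rewrite /= minS; apply/forall_inP.
Qed.

End MinCostCover.

Section FractionalCliqueLP.
Variables (R : realFieldType) (T : finType) (h : rel T).

Local Notation n := #|T|.+1.

(* Variable [0] of the LP is the objective value, variable [var u] the weight of [u]. *)
Definition var (u : T) : nat := (enum_rank u).+1.

Lemma var_inj : injective var.
Proof. by move=> u w /succn_inj/val_inj/enum_rank_inj. Qed.

Definition row (a0 : R) (w : T -> R) (b : R) : ineq R := (a0 :: codom w, b).

Lemma lhs_row x a0 w b : lhs n x (row a0 w b) = a0 * x 0%N + \sum_u w u * x (var u).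
Proof.
rewrite /lhs big_ord_recl; congr (_ + _).
transitivity (\sum_(i < #|T|) w (enum_val i) * x (var (enum_val i))).
  by apply: eq_bigr => i _; rewrite /= nth_codom /var enum_valK.
by rewrite -(big_enum_val (fun u => w u * x (var u))).
Qed.

Lemma sum_indicatorM (P : pred T) (f : T -> R) : \sum_u (P u)%:R * f u = \sum_(u | P u) f u.
Proof. by rewrite [RHS]big_mkcond; apply: eq_bigr => u _; rewrite mulr_natl mulrb. Qed.

Definition fclique_system : seq (ineq R) :=
  [:: row 1 (fun _ => -1) 0, row (-1) (fun _ => 1) 0 &
   [seq row 0 (fun w => - (w == u)%:R) 0 | u <- enum T] ++
   [seq row 0 (fun w => (w \in J)%:R) 1
      | J : {set T} <- enum [pred J : {set T} | independent h J]]].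

Lemma fclique_system_sound x : solves n x fclique_system ->
  fclique_feasible h (fun u => x (var u)) /\ \sum_u x (var u) = x 0%N.
Proof.
move=> /allP sol.
have sol_row a0 w b : row a0 w b \in fclique_system ->
    a0 * x 0%N + \sum_u w u * x (var u) <= b.
  by move/sol; rewrite /holds lhs_row.
split; first split.
- move=> u; have := sol_row 0 (fun w => - (w == u)%:R) 0.
  rewrite mul0r add0r; under eq_bigr do rewrite mulNr.
  rewrite sumrN sum_indicatorM big_pred1_eq oppr_le0; apply.
  by rewrite !inE mem_cat; apply/or4P; constructor 3; apply/mapP; exists u; rewrite ?mem_enum.
- move=> J indJ; have := sol_row 0 (fun w => (w \in J)%:R) 1.
  rewrite mul0r add0r sum_indicatorM; apply.
  by rewrite !inE mem_cat; apply/or4P; constructor 4; apply/mapP; exists J; rewrite ?mem_enum.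
have sum_le : \sum_u x (var u) <= x 0%N.
  have := sol_row (-1) (fun _ => 1) 0; rewrite !inE eqxx orbT mulN1r.
  by under eq_bigr do rewrite mul1r; rewrite addrC subr_le0; apply.
have sum_ge : x 0%N <= \sum_u x (var u).
  have := sol_row 1 (fun _ => -1) 0; rewrite !inE eqxx mul1r.
  by under eq_bigr do rewrite mulN1r; rewrite sumrN subr_le0; apply.
by apply/eqP; rewrite eq_le sum_le sum_ge.
Qed.

Definition fclique_point (y : T -> R) (i : nat) : R :=
  if i is 0 then \sum_u y u else \sum_(u | var u == i) y u.

Lemma fclique_point_var y u : fclique_point y (var u) = y u.
Proof.
by rewrite /= (eq_bigl (pred1 u)) ?big_pred1_eq // => w; rewrite /= (inj_eq var_inj).
Qed.

Lemma fclique_system_complete y : fclique_feasible h y ->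
  solves n (fclique_point y) fclique_system.
Proof.
move=> [y_ge0 y_indep].
have holds_row a0 w b : holds n (fclique_point y) (row a0 w b) =
    (a0 * \sum_u y u + \sum_u w u * y u <= b).
  by rewrite /holds lhs_row; under eq_bigr do rewrite fclique_point_var.
apply/allP => a; rewrite !inE mem_cat.
case/or4P => [/eqP-> | /eqP-> | /mapP[u _ ->] | /mapP[J indJ ->]]; rewrite holds_row.
- by rewrite -mulr_sumr mul1r mulN1r subrr.
- by rewrite -mulr_sumr !mul1r mulN1r addNr.
- rewrite mul0r add0r (eq_bigr _ (fun u _ => mulNr _ _)).
  by rewrite sumrN sum_indicatorM big_pred1_eq oppr_le0.
- by rewrite mul0r add0r sum_indicatorM; apply: y_indep; rewrite mem_enum in indJ.
Qed.

Lemma fclique_number_exists : irreflexive h -> exists r : R, is_fclique_number h r.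
Proof.
move=> h_irr.
have [||x sol_x max_x] := @lp_max R #|T| fclique_system.
- exists (fclique_point (fun _ => 0)); apply: fclique_system_complete.
  by split=> [u|J _]; rewrite /wt ?big1 ?ler01.
- exists #|T|%:R => x /fclique_system_sound[[_ x_indep] <-].
  rewrite -sumr_const; apply: ler_sum => u _.
  by have := x_indep _ (independent_set1 u h_irr); rewrite /wt big_set1.
exists (x 0%N); split.
  by exists (fun u => x (var u)); exact: fclique_system_sound.
by move=> y /fclique_system_complete/max_x.
Qed.

End FractionalCliqueLP.

Section UnitCost.
Variables (R : realFieldType) (V : finType) (e : rel V) (v : V).
Hypothesis e_simple : simple_graph e.
Local Notation c := (unit_cost R v).
Local Notation S := (chosen_cover e c).

Let e_sym : symmetric e. Proof. by case: e_simple. Qed.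
Let e_irr : irreflexive e. Proof. by case: e_simple. Qed.

Lemma wt_unit_cost (X : {set V}) : wt c X = (v \in X)%:R.
Proof.
rewrite /wt /unit_cost; have [vX | vNX] := boolP (v \in X).
  by rewrite (bigD1 v) //= eqxx big1 ?addr0 // => u /andP[_ /negbTE->].
by rewrite big1 // => u uX; case: eqP => // uv; rewrite -uv uX in vNX.
Qed.

Lemma notin_chosen_cover : v \notin S.
Proof.
have covC1 : vertex_cover e (~: [set v]) by rewrite vertex_coverC independent_set1.
case/andP: (chosen_cover_min e c) => _ /forall_inP/(_ _ covC1).
by rewrite !wt_unit_cost !inE eqxx; case: (v \in S); rewrite ?ler10.
Qed.

Lemma nbhd_chosen_cover u : e v u -> u \in S.
Proof.
case/andP: (chosen_cover_min e c) => /vertex_coverP cov _ /cov.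
by rewrite (negbTE notin_chosen_cover).
Qed.

Lemma sum_nbhd (P : pred V) (F : V -> R) :
  \sum_(u | e v u && P u) F u = \sum_(w : nbhd_type e v | P (val w)) F (val w).
Proof.
rewrite (reindex_omap (val : nbhd_type e v -> V) insub); last first.
  by move=> u /andP[evu _]; rewrite insubT.
by apply: eq_bigl => w; rewrite valK eqxx (valP w) andbT.
Qed.

Section NuFeasible.
Variable x : V -> R.
Hypothesis x_feas : nu_feasible e c x.

Lemma nu_feasible_ge0 u : u != v -> 0 <= x u.
Proof. by case: x_feas => ge _ uv; have := ge u; rewrite /unit_cost (negbTE uv). Qed.

Lemma nu_feasible_wtC : wt x (~: S) = 1.
Proof.
case: x_feas => _ [out _]; rewrite /wt (eq_bigr c) => [|u]; last by rewrite inE => /out.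
by have := wt_unit_cost (~: S); rewrite /wt inE notin_chosen_cover => ->.
Qed.

(* Replacing [u] in [S] by its neighbours outside [S] gives a cover, and those
   neighbours have weight [c = 0] because [u] is not adjacent to [v]. *)
Lemma nu_feasible_nonnbhd u : u \in S -> ~~ e v u -> x u = 0.
Proof.
move=> uS vNu; case: x_feas => _ [out minS].
have uv : u != v by apply: contraTneq uS => ->; exact: notin_chosen_cover.
pose N := [set w | e u w & w \notin S].
have N0 : wt x N = 0.
  rewrite /wt big1 // => w; rewrite inE => /andP[euw wNS].
  rewrite out // /unit_cost; case: eqP => // wv; move: vNu.
  by rewrite -wv e_sym euw.
have covS' : vertex_cover e (S :\ u :|: N).
  have cov1 a b : e a b -> a \in S -> (a \in S :\ u :|: N) || (b \in S :\ u :|: N).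
    move=> eab aS; have [ua | ua] := eqVneq u a; last by rewrite !inE eq_sym ua aS.
    subst a.
    have bu : b != u by apply/eqP => bu; rewrite bu e_irr in eab.
    by rewrite !inE bu eab; case: (b \in S); rewrite ?orbT.
  apply/vertex_coverP => a b eab.
  case/andP: (chosen_cover_min e c) => /vertex_coverP /(_ a b eab) /orP[aS | bS] _.
    exact: cov1.
  by rewrite orbC; apply: cov1 bS; rewrite e_sym.
have disj : [disjoint S :\ u & N].
  by rewrite -setI_eq0; apply/eqP/setP => w; rewrite !inE; case: (w \in S); rewrite ?andbF.
have := minS _ covS'; rewrite /wt (big_setD1 _ uS) /=.
rewrite [X in _ <= X -> _](eq_bigl [predU S :\ u & N]) => [|w]; last by rewrite !inE.
rewrite bigU //= -/(wt x N) N0 addr0 gerDr => xu_le0.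
by apply/eqP; rewrite eq_le xu_le0 nu_feasible_ge0.
Qed.

Lemma nu_feasible_wt_nbhd : wt x S = \sum_(w : nbhd_type e v) x (val w).
Proof.
rewrite /wt (bigID (e v)) /= [X in _ + X]big1 ?addr0; last first.
  by move=> u /andP[uS vNu]; apply: nu_feasible_nonnbhd.
rewrite -(sum_nbhd xpredT); apply: eq_bigl => u; rewrite andbT andb_idl //.
exact: nbhd_chosen_cover.
Qed.

Lemma nu_feasible_fclique : fclique_feasible (nbhd_rel e v) (fun w => x (val w)).
Proof.
split=> [w | J indJ].
  by apply: nu_feasible_ge0; apply: contraTneq (valP w) => ->; rewrite e_irr.
pose K := [set val w | w in J].
have indK : independent e K.
  apply/forall_inP => _ /imsetP[a aJ ->]; apply/forall_inP => _ /imsetP[b bJ ->].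
  exact: forall_inP (forall_inP indJ a aJ) b bJ.
case: x_feas => _ [_ minS].
have := minS _ (eqbRL (vertex_coverC e K) indK).
have -> : wt (fun w => x (val w)) J = wt x K.
  by rewrite /wt big_imset //; apply: in2W val_inj.
have := wt_setC x K; rewrite -(wt_setC x S) nu_feasible_wtC => sumK.
by rewrite -(lerD2l (wt x K)) sumK addrC lerD2l.
Qed.

End NuFeasible.

Definition extend_nbhd (y : nbhd_type e v -> R) (u : V) : R :=
  if insub u is Some w then y w else 0.

Lemma wt_extend_nbhd y (X : {set V}) :
  wt (extend_nbhd y) X = \sum_(w : nbhd_type e v | val w \in X) y w.
Proof.
rewrite /wt (bigID (e v)) /= [X in _ + X]big1 ?addr0; last first.
  by move=> u /andP[_ vNu]; rewrite /extend_nbhd insubF // (negbTE vNu).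
rewrite (eq_bigl (fun u => e v u && (u \in X))) => [|u]; last by rewrite andbC.
by rewrite sum_nbhd; apply: eq_bigr => w _; rewrite /extend_nbhd valK.
Qed.

Section Extension.
Variable y : nbhd_type e v -> R.
Hypothesis y_feas : fclique_feasible (nbhd_rel e v) y.

Let x u := c u + extend_nbhd y u.

Lemma wt_unit_cost_extend (X : {set V}) :
  wt x X = (v \in X)%:R + \sum_(w : nbhd_type e v | val w \in X) y w.
Proof. by rewrite /wt big_split -!/(wt _ X) wt_unit_cost wt_extend_nbhd. Qed.

Lemma wt_chosen_cover_extend : wt x S = \sum_w y w.
Proof.
rewrite wt_unit_cost_extend (negbTE notin_chosen_cover) add0r.
by apply: eq_bigl => w; apply: nbhd_chosen_cover (valP w).
Qed.

Lemma nu_feasible_extend : nu_feasible e c x.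
Proof.
case: y_feas => y_ge0 y_indep; split; [|split].
- by move=> u; rewrite /x lerDl /extend_nbhd; case: insubP.
- move=> u uNS; rewrite /x /extend_nbhd insubF ?addr0 //.
  by apply: contraNF uNS; apply: nbhd_chosen_cover.
move=> T /vertex_coverP covT.
rewrite wt_chosen_cover_extend wt_unit_cost_extend (bigID (fun w => val w \in T)) /=.
rewrite addrC lerD2r; have [vT | vNT] := boolP (v \in T).
  have := y_indep [set w | val w \notin T].
  rewrite /wt (eq_bigl (fun w => val w \notin T)) => [|w]; last by rewrite inE.
  apply; apply/forall_inP => a; rewrite inE => aNT.
  apply/forall_inP => b; rewrite inE => bNT; apply/negP => eab.
  by have := covT _ _ eab; rewrite (negbTE aNT) (negbTE bNT).
rewrite big1 // => w wNT; have := covT _ _ (valP w).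
by rewrite (negbTE vNT) (negbTE wNT).
Qed.

End Extension.

Lemma nbhd_rel_irr : irreflexive (nbhd_rel e v).
Proof. by move=> w; apply: e_irr. Qed.

End UnitCost.

Theorem mainTheorem5 (R : realFieldType) (V : finType) (e : rel V) (v : V) :
  simple_graph e -> no_isolated e ->
  exists r : R, is_nu e (unit_cost R v) r /\ is_fclique_number (nbhd_rel e v) r.
Proof.
move=> e_simple _.
have [r r_fclique] := fclique_number_exists R (nbhd_rel_irr (v := v) e_simple).
exists r; split=> //; case: r_fclique => [[y [y_feas <-]] y_max]; split.
  exists (fun u => unit_cost R v u + extend_nbhd y u).
  by split; [exact: nu_feasible_extend | exact: wt_chosen_cover_extend].
move=> x x_feas; rewrite nu_feasible_wt_nbhd //.
exact/y_max/nu_feasible_fclique.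
Qed.
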